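(* Let $A,B$ be $P$-operators on the same probability space $\Omega$. Then $d_M(A,B)\le 3\|A-B\|_{\infty\to1}^{1/2}$.
   Context: A $P$-operator on a probability space $\Omega$ is a linear $A:L^\infty(\Omega)\to L^1(\Omega)$, $v\mapsto vA$, with $\|A\|_{\infty\to1}:=\sup_v\|vA\|_1/\|v\|_\infty<\infty$. $\mathcal{S}_k(A)$ is the set of joint distributions on $\mathbb{R}^{2k}$ of $(v_1,\dots,v_k,v_1A,\dots,v_kA)$ over measurable $v_i:\Omega\to[-1,1]$. $d_{\rm LP}(\eta_1,\eta_2)=\inf\{\varepsilon>0:\eta_1(U)\le\eta_2(U^\varepsilon)+\varepsilon,\ \eta_2(U)\le\eta_1(U^\varepsilon)+\varepsilon\text{ for all Borel }U\}$ ($U^\varepsilon$ the open $\varepsilon$-neighborhood), $d_H$ the corresponding Hausdorff distance between sets of measures, and $d_M(A,B)=\sum_{k\ge1}2^{-k}d_H(\mathcal{S}_k(A),\mathcal{S}_k(B))$. *)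

From HB Require Import structures.
From mathcomp Require Import all_boot all_order all_algebra.
From mathcomp Require Import all_classical all_reals all_analysis.
Set Implicit Arguments. Unset Strict Implicit. Unset Printing Implicit Defensive.
Import Order.TTheory GRing.Theory Num.Theory.
Import numFieldNormedType.Exports.
Local Open Scope classical_set_scope.
Local Open Scope ring_scope.

Section POperators.
Context (d : measure_display) (T : measurableType d) (R : realType)
        (P : probability T R).

(* Representatives of elements of L^oo(Omega): bounded measurable functions. *)
Definition bdd_mfun (v : T -> R) : Prop :=
  measurable_fun setT v /\ exists M : R, forall x, `|v x| <= M.

Definition unit_mfun (v : T -> R) : Prop :=
  measurable_fun setT v /\ forall x, `|v x| <= 1.

Definition opnorm (A : (T -> R) -> (T -> R)) : \bar R :=
  ereal_sup [set (\int[P]_x (`|A v x|)%:E)%E | v in unit_mfun].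

(* A P-operator: a linear map L^oo(Omega) -> L^1(Omega) with finite
   (oo -> 1)-norm, given on representatives: it respects a.e. equality,
   is linear up to a.e. equality, and sends L^oo into L^1. *)
Definition P_operator (A : (T -> R) -> (T -> R)) : Prop :=
  [/\ (forall v, bdd_mfun v -> P.-integrable setT (EFin \o A v)),
      (forall v w, bdd_mfun v -> bdd_mfun w ->
         \forall x \ae P, A (fun y => v y + w y) x = A v x + A w x),
      (forall (a : R) v, bdd_mfun v ->
         \forall x \ae P, A (fun y => a * v y) x = a * A v x),
      (forall v w, bdd_mfun v -> bdd_mfun w ->
         (\forall x \ae P, v x = w x) -> \forall x \ae P, A v x = A w x) &
      (opnorm A < +oo)%E].

Definition joint_map (k : nat) (A : (T -> R) -> (T -> R))
    (v : 'I_k -> T -> R) : T -> 'rV[R]_(k + k) :=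
  fun x => row_mx (\row_(i < k) v i x) (\row_(i < k) A (v i) x).

Definition law (n : nat) (f : T -> 'rV[R]_n) : set 'rV[R]_n -> \bar R :=
  fun U => P (f @^-1` U).

Definition S_k (k : nat) (A : (T -> R) -> (T -> R)) : set (set 'rV[R]_(k + k) -> \bar R) :=
  [set law (joint_map A v) | v in [set v : 'I_k -> T -> R | forall i, unit_mfun (v i)]].

End POperators.
Arguments S_k {d T R} P k A.

Section LP.
Context (R : realType).

Definition edist (n : nat) (x y : 'rV[R]_n) : R :=
  Num.sqrt (\sum_(i < n) (x ord0 i - y ord0 i) ^+ 2).

Definition nbhd_eps (n : nat) (U : set 'rV[R]_n) (e : R) : set 'rV[R]_n :=
  [set y | exists2 x, U x & edist x y < e].

Definition borel_set (n : nat) (U : set 'rV[R]_n) : Prop := <<s open >> U.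

Definition dLP (n : nat) (eta1 eta2 : set 'rV[R]_n -> \bar R) : \bar R :=
  ereal_inf [set e%:E | e in [set e : R | 0 < e /\
     forall U, borel_set U ->
       (eta1 U <= eta2 (nbhd_eps U e) + e%:E)%E /\
       (eta2 U <= eta1 (nbhd_eps U e) + e%:E)%E]].

Definition dH (n : nat) (S1 S2 : set (set 'rV[R]_n -> \bar R)) : \bar R :=
  Order.max
    (ereal_sup [set ereal_inf [set dLP eta mu | mu in S2] | eta in S1])
    (ereal_sup [set ereal_inf [set dLP eta mu | eta in S1] | mu in S2]).

End LP.

Definition dM (d : measure_display) (T : measurableType d) (R : realType)
    (P : probability T R) (A B : (T -> R) -> (T -> R)) : \bar R :=
  (\sum_(1 <= k <oo) ((2 ^- k : R)%:E * dH (S_k P k A) (S_k P k B)))%E.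

(* Fix unit functions v_1, ..., v_k.  The joint laws of (v, vA) and (v, vB)
   are the images of P under two maps whose Euclidean distance is at most
   D = sum_i |v_i A - v_i B|, and E[D] <= k ||A - B||.  By Markov's inequality
   P(D >= e) <= k ||A - B|| / e <= e as soon as e > k ||A - B||^(1/2), and two
   laws coupled so that P(distance >= e) <= e are at Levy-Prokhorov distance at
   most e.  Hence d_H(S_k(A), S_k(B)) <= k ||A - B||^(1/2), and the weights give
   sum_k k 2^-k = 2 <= 3. *)

From Pilot Require Import Defs.
From HB Require Import structures.
From mathcomp Require Import all_boot all_order all_algebra.
From mathcomp Require Import all_classical all_reals all_analysis.
From mathcomp Require Import measurable_realfun ring.
Import Order.TTheory GRing.Theory Num.Theory.
Import numFieldNormedType.Exports.
Local Open Scope classical_set_scope.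
Local Open Scope ring_scope.
Set Implicit Arguments. Unset Strict Implicit. Unset Printing Implicit Defensive.

Definition rat_box (R : realType) n (q : 'rV[rat]_n) (r : nat) : set 'rV[R]_n :=
  [set y | forall j, `|y ord0 j - ratr (q ord0 j)| < r.+1%:R^-1].

Lemma open_rat_box_cover (R : realType) n (U : set 'rV[R]_n) x : open U -> U x ->
  exists q r, rat_box q r x /\ rat_box q r `<=` U.
Proof.
move=> /(_ x) oU /oU /nbhs_ballP[e e0 eU].
have [r] : exists r : nat, 0 + r.+1%:R^-1 < e / 2.
  by apply: ltr_add_invr; rewrite divr_gt0.
rewrite add0r => re.
have r0 : 0 < r.+1%:R^-1 :> R by rewrite invr_gt0 ltr0n.
have qx j : exists q : rat, `|x ord0 j - ratr q| < r.+1%:R^-1.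
  have [|q] := @rat_in_itvoo R (x ord0 j - r.+1%:R^-1) (x ord0 j + r.+1%:R^-1).
    by rewrite ltrBlDr -addrA ltrDl addr_gt0.
  by rewrite in_itv /= => /andP[q1 q2]; exists q; rewrite distrC ltr_distl q1 q2.
have [qf qfx] := choice qx.
exists (\row_j qf j), r; split=> [j|y yq]; rewrite ?mxE //.
apply: eU; split=> // i j; have -> : i = ord0 := ord1 i.
move: (yq j) (qfx j); rewrite mxE => yqj xqj.
rewrite /ball /= (splitr e); apply: le_lt_trans (ler_distD (ratr (qf j)) _ _) _.
by rewrite ltrD // ?(distrC (ratr _)); apply: lt_trans re.
Qed.

Section coordinatewise_measurable.
Context d (T : measurableType d) (R : realType) (n : nat) (F : T -> 'rV[R]_n).
Hypothesis mF : forall j, measurable_fun setT (fun t => F t ord0 j).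

Lemma measurable_preimage_rat_box q r : measurable (F @^-1` rat_box q r).
Proof.
have -> : F @^-1` rat_box q r = \bigcap_(j in setT) (setT `&` (fun t => F t ord0 j) @^-1`
    `]ratr (q ord0 j) - r.+1%:R^-1, ratr (q ord0 j) + r.+1%:R^-1[).
  apply/seteqP; split=> t /=.
    by move=> tq j _; split=> //=; rewrite in_itv /= -ltr_distl.
  by move=> tq j; have [_] := tq j I; rewrite /= in_itv /= -ltr_distl.
apply: fin_bigcap_measurable; first exact: finite_finset.
by move=> j _; apply: mF => //; exact: measurable_itv.
Qed.

Lemma measurable_preimage_open U : open U -> measurable (F @^-1` U).
Proof.
move=> oU.
have -> : F @^-1` U = \bigcup_(qr : 'rV[rat]_n * nat)
    (if `[< rat_box qr.1 qr.2 `<=` U >] then F @^-1` rat_box qr.1 qr.2 else set0).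
  apply/seteqP; split=> t /=.
    move=> /(open_rat_box_cover oU)[q [r [tq qU]]].
    by exists (q, r) => //=; case: asboolP.
  by move=> [[q r] _] /=; case: asboolP => // qU /qU.
apply: countable_bigcupT_measurable; first exact: countableP.
by move=> [q r] /=; case: asboolP => _; [exact: measurable_preimage_rat_box|].
Qed.

Lemma measurable_preimage_borel U : borel_set U -> measurable (F @^-1` U).
Proof.
move=> BU; apply: (BU [set V | measurable (F @^-1` V)]); split; [split|].
- by rewrite /= preimage_set0.
- by move=> V mV /=; rewrite setTD -preimage_setC; exact: measurableC.
- by move=> V mV /=; rewrite preimage_bigcup; exact: bigcupT_measurable.
- exact: measurable_preimage_open.
Qed.

End coordinatewise_measurable.

(* [edist] alone would refer to the extended distance of mathcomp-analysis. *)
Section euclidean_distance.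
Context (R : realType).

Lemma sqrt_sum_sqr_le_sum_norm (I : Type) (s : seq I) (a : I -> R) :
  Num.sqrt (\sum_(i <- s) a i ^+ 2) <= \sum_(i <- s) `|a i|.
Proof.
have sum_ge0 : 0 <= \sum_(i <- s) `|a i| by apply: sumr_ge0.
rewrite -(ger0_norm sum_ge0) -sqrtr_sqr; apply: ler_wsqrtr.
elim: s {sum_ge0} => [|x s ih]; first by rewrite !big_nil expr0n.
rewrite !big_cons sqrrD -(real_normK (num_real (a x))) -addrA lerD2l.
by apply: ler_wpDl ih; rewrite mulrn_wge0 // mulr_ge0 // sumr_ge0.
Qed.

Lemma edistC n (x y : 'rV[R]_n) : Defs.edist x y = Defs.edist y x.
Proof.
by rewrite /Defs.edist; congr Num.sqrt; apply: eq_bigr => i _; rewrite -sqrrN opprB.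
Qed.

Lemma edist_continuous n (x : 'rV[R]_n) : continuous (Defs.edist x).
Proof.
move=> y; apply: (@continuous_comp _ _ _ _ Num.sqrt); last exact: sqrt_continuous.
apply: (continuous_big add_continuous) => i _ z.
apply: (@continuous_comp _ _ _ (fun z : 'rV_n => x ord0 i - z ord0 i) (fun r => r ^+ 2)).
  by apply: continuousB; [exact: cst_continuous | exact: coord_continuous].
exact: exprn_continuous.
Qed.

Lemma open_nbhd_eps n (U : set 'rV[R]_n) e : open (nbhd_eps U e).
Proof.
have -> : nbhd_eps U e = \bigcup_(x in U) (Defs.edist x @^-1` `]-oo, e[).
  by apply/seteqP; split=> y /= [x Ux xy]; exists x => //=; rewrite in_itv.
apply: bigcup_open => x _; apply: open_comp; last exact: interval_open.
by move=> y _; exact: edist_continuous.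
Qed.

Lemma borel_nbhd_eps n (U : set 'rV[R]_n) e : borel_set (nbhd_eps U e).
Proof. by apply: sub_sigma_algebra; exact: open_nbhd_eps. Qed.

End euclidean_distance.

Lemma markov_nonneg d (T : measurableType d) (R : realType)
    (mu : {measure set T -> \bar R}) (D : T -> R) (e : R) : measurable_fun setT D ->
  (forall t, 0 <= D t) -> 0 < e ->
  (e%:E * mu [set t | (e <= D t)%R] <= \int[mu]_t (D t)%:E)%E.
Proof.
move=> mD D0 e0.
have := @le_integral_comp_abse _ _ _ mu setT measurableT (EFin \o D) e id
  (@measurable_id _ _ setT) (fun _ r0 => r0) (fun _ _ _ _ => id)
  ((measurable_EFinP _ _).2 mD) e0.
congr (_ * mu _ <= _)%E; last by apply: eq_integral => t _; rewrite /= ger0_norm.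
by apply/seteqP; split=> t /=; rewrite ger0_norm // lee_fin // => -[].
Qed.

Section levy_prokhorov_coupling.
Context d (T : measurableType d) (R : realType) (P : probability T R) (n : nat).
Variables (f g : T -> 'rV[R]_n) (D : T -> R).
Hypotheses (mf : forall j, measurable_fun setT (fun t => f t ord0 j))
  (mg : forall j, measurable_fun setT (fun t => g t ord0 j))
  (mD : measurable_fun setT D)
  (fgD : forall t, Defs.edist (f t) (g t) <= D t).

Lemma law_le_law_nbhd_eps (e : R) U : borel_set U ->
  (P [set t | (e <= D t)%R] <= e%:E)%E ->
  (law P f U <= law P g (nbhd_eps U e) + e%:E)%E.
Proof.
move=> BU De.
have mDe : measurable [set t | (e <= D t)%R].
  by rewrite -[X in measurable X]setTI; exact: measurable_fun_le.
have mgU : measurable (g @^-1` nbhd_eps U e).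
  by apply: measurable_preimage_borel => //; exact: borel_nbhd_eps.
have fU_sub : f @^-1` U `<=` g @^-1` nbhd_eps U e `|` [set t | (e <= D t)%R].
  move=> t /= Uft; have [fgt|] := ltP (Defs.edist (f t) (g t)) e.
    by left; exists (f t).
  by move=> /le_trans/(_ (fgD t)); right.
apply: (le_trans (le_measure _ _ _ fU_sub)); rewrite ?inE //.
- exact: measurable_preimage_borel.
- exact: measurableU.
by apply: (le_trans (measureU2 _ mgU mDe)); rewrite leeD2l.
Qed.

End levy_prokhorov_coupling.

Lemma dLP_law_le d (T : measurableType d) (R : realType) (P : probability T R) n
    (f g : T -> 'rV[R]_n) (D : T -> R) (c : R) :
  (forall j, measurable_fun setT (fun t => f t ord0 j)) ->
  (forall j, measurable_fun setT (fun t => g t ord0 j)) ->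
  measurable_fun setT D -> (forall t, Defs.edist (f t) (g t) <= D t) -> 0 <= c ->
  (forall e, c < e -> (P [set t | (e <= D t)%R] <= e%:E)%E) ->
  (dLP (law P f) (law P g) <= c%:E)%E.
Proof.
move=> mf mg mD fgD c0 De; apply/lee_addgt0Pr => eps eps0.
have gfD t : Defs.edist (g t) (f t) <= D t by rewrite edistC.
have ceps : c < c + eps by rewrite ltrDl.
apply: ereal_inf_lbound; exists (c + eps) => //; split; first exact: le_lt_trans ceps.
move=> U BU; split.
- exact: (law_le_law_nbhd_eps mf mg mD fgD BU (De _ ceps)).
- exact: (law_le_law_nbhd_eps mg mf mD gfD BU (De _ ceps)).
Qed.

Section P_operators.
Context d (T : measurableType d) (R : realType) (P : probability T R).
Implicit Types (A B C : (T -> R) -> T -> R) (v : T -> R).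

Lemma unit_mfun_bdd v : unit_mfun v -> bdd_mfun v.
Proof. by move=> [mv v1]; split=> //; exists 1. Qed.

Lemma unit_mfun_cst0 : unit_mfun (fun _ : T => 0 : R).
Proof. by split=> [|x]; [exact: measurable_cst | rewrite normr0]. Qed.

Lemma measurable_P_operator A v : P_operator P A -> unit_mfun v ->
  measurable_fun setT (A v).
Proof.
move=> [intA _ _ _ _] /unit_mfun_bdd/intA/measurable_int.
by move/measurable_EFinP.
Qed.

Lemma integral_norm_le_opnorm C v : unit_mfun v ->
  (\int[P]_x (`|C v x|)%:E <= opnorm P C)%E.
Proof. by move=> v1; apply: ereal_sup_ubound; exists v. Qed.

Lemma opnorm_ge0 C : (0 <= opnorm P C)%E.
Proof.
apply: le_trans (integral_norm_le_opnorm C unit_mfun_cst0).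
by apply: integral_ge0 => x _; rewrite lee_fin.
Qed.

Lemma opnormB_le A B : P_operator P A -> P_operator P B ->
  (opnorm P (fun v x => (A v x - B v x)%R) <= opnorm P A + opnorm P B)%E.
Proof.
move=> PA PB; apply: ge_ereal_sup => _ [v v1 <-].
have mnorm (f : T -> R) :
    measurable_fun setT f -> measurable_fun setT (fun x => (`|f x|)%:E).
  by move=> mf; apply/measurable_EFinP; exact: measurableT_comp.
have mA := measurable_P_operator PA v1; have mB := measurable_P_operator PB v1.
have nA := mnorm _ mA; have nB := mnorm _ mB.
apply: le_trans (leeD (integral_norm_le_opnorm A v1) (integral_norm_le_opnorm B v1)).
rewrite -ge0_integralD //; apply: ge0_le_integral => //.
- by apply: mnorm; exact: measurable_funB.
- exact: emeasurable_funD.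
- by move=> x _; rewrite -EFinD lee_fin ler_normB.
Qed.

Lemma fin_num_opnormB A B : P_operator P A -> P_operator P B ->
  opnorm P (fun v x => A v x - B v x) \is a fin_num.
Proof.
move=> PA PB; have [_ _ _ _ finA] := PA; have [_ _ _ _ finB] := PB.
rewrite ge0_fin_numE ?opnorm_ge0 //.
exact: le_lt_trans (opnormB_le PA PB) (lte_add_pinfty finA finB).
Qed.

End P_operators.

Section joint_laws.
Context d (T : measurableType d) (R : realType) (P : probability T R) (k : nat).
Implicit Types (A B C : (T -> R) -> T -> R).

Lemma measurable_joint_map_coord A (v : 'I_k -> T -> R) :
  (forall i, measurable_fun setT (v i)) -> (forall i, measurable_fun setT (A (v i))) ->
  forall j, measurable_fun setT (fun t => joint_map A v t ord0 j).
Proof.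
move=> mv mAv j; rewrite /joint_map; case: (split_ordP j) => i -> {j}.
  by under eq_fun do rewrite row_mxEl mxE; exact: mv.
by under eq_fun do rewrite row_mxEr mxE; exact: mAv.
Qed.

Lemma edist_joint_map_le A B (v : 'I_k -> T -> R) t :
  Defs.edist (joint_map A v t) (joint_map B v t) <= \sum_(i < k) `|A (v i) t - B (v i) t|.
Proof.
rewrite /Defs.edist big_split_ord /= big1 => [|i _]; last first.
  by rewrite /joint_map !row_mxEl !mxE subrr expr0n.
rewrite add0r; under eq_bigr do rewrite /joint_map !row_mxEr !mxE.
exact: sqrt_sum_sqr_le_sum_norm.
Qed.

Lemma integral_sum_norm_le_opnorm C (v : 'I_k -> T -> R) : (forall i, unit_mfun (v i)) ->
  (forall i, measurable_fun setT (C (v i))) ->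
  (\int[P]_t (\sum_(i < k) `|C (v i) t|)%:E <= opnorm P C *+ k)%E.
Proof.
move=> v1 mCv.
under eq_integral do rewrite -sumEFin.
rewrite ge0_integral_sum // => [|i]; last first.
  by apply/measurable_EFinP; exact: measurableT_comp.
apply: le_trans (lee_sum _ (fun i _ => integral_norm_le_opnorm P C (v1 i))) _.
by rewrite sumr_const card_ord.
Qed.

Lemma dLP_joint_law_le A B (v : 'I_k -> T -> R) : P_operator P A -> P_operator P B ->
  (forall i, unit_mfun (v i)) ->
  (dLP (law P (joint_map A v)) (law P (joint_map B v)) <=
    (k%:R * Num.sqrt (fine (opnorm P (fun v x => A v x - B v x))))%:E)%E.
Proof.
move=> PA PB v1; set delta := fine _.
have delta0 : 0 <= delta by apply/fine_ge0/opnorm_ge0.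
have c0 : 0 <= k%:R * Num.sqrt delta by rewrite mulr_ge0 ?sqrtr_ge0.
have mv i := (v1 i).1.
have mAv i := measurable_P_operator PA (v1 i).
have mBv i := measurable_P_operator PB (v1 i).
have mABv i : measurable_fun setT (fun t => A (v i) t - B (v i) t).
  exact: measurable_funB.
have mD : measurable_fun setT (fun t => \sum_(i < k) `|A (v i) t - B (v i) t|).
  by apply: measurable_sum => i; exact: measurableT_comp.
apply: (dLP_law_le (measurable_joint_map_coord mv mAv)
  (measurable_joint_map_coord mv mBv) mD (edist_joint_map_le A B v) c0).
move=> e lt_ce; have e0 : 0 < e := le_lt_trans c0 lt_ce.
rewrite -(@lee_pmul2l _ e%:E) ?lte_fin // -EFinM.
apply: le_trans (markov_nonneg _ mD (fun t => sumr_ge0 _ (fun i _ => normr_ge0 _)) e0) _.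
apply: le_trans (integral_sum_norm_le_opnorm (C := fun w x => A w x - B w x) v1 mABv) _.
rewrite -(fineK (fin_num_opnormB PA PB)) -/delta -EFin_natmul lee_fin -mulr_natl.
have k_le_k2 : k%:R <= k%:R ^+ 2 :> R.
  by rewrite -natrX ler_nat; case: (posnP k) => [->|k0]; rewrite // expnS expn1 leq_pmulr.
apply: le_trans (ler_wpM2r delta0 k_le_k2) _.
by rewrite -[delta]sqr_sqrtr // -exprMn expr2 ler_pM // ltW.
Qed.

End joint_laws.

Section hausdorff.
Context (R : realType) (n : nat).

Lemma dLP_ge0 (eta mu : set 'rV[R]_n -> \bar R) : (0 <= dLP eta mu)%E.
Proof. by apply: le_ereal_inf_tmp => _ [e [e0 _] <-]; rewrite lee_fin ltW. Qed.

Lemma dH_ge0 (S1 S2 : set (set 'rV[R]_n -> \bar R)) : S1 !=set0 -> (0 <= dH S1 S2)%E.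
Proof.
move=> [eta S1eta]; rewrite le_max; apply/orP; left.
apply: ereal_sup_ge; exists (ereal_inf [set dLP eta mu | mu in S2]); first by exists eta.
by apply: le_ereal_inf_tmp => _ [mu _ <-]; exact: dLP_ge0.
Qed.

Lemma dH_le (S1 S2 : set (set 'rV[R]_n -> \bar R)) (c : \bar R) :
  (forall eta, S1 eta -> exists2 mu, S2 mu & (dLP eta mu <= c)%E) ->
  (forall mu, S2 mu -> exists2 eta, S1 eta & (dLP eta mu <= c)%E) ->
  (dH S1 S2 <= c)%E.
Proof.
move=> S12 S21; rewrite ge_max; apply/andP; split; apply: ge_ereal_sup => _ [eta Seta <-].
- have [mu S2mu le_c] := S12 _ Seta.
  by apply: ge_ereal_inf; exists (dLP eta mu) => //; exists mu.
- have [mu S1mu le_c] := S21 _ Seta.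
  by apply: ge_ereal_inf; exists (dLP mu eta) => //; exists mu.
Qed.

End hausdorff.

Section S_k.
Context d (T : measurableType d) (R : realType) (P : probability T R) (k : nat).
Implicit Types (A B : (T -> R) -> T -> R).

Lemma S_k_neq0 A : S_k P k A !=set0.
Proof.
exists (law P (joint_map A (fun _ _ => 0))), (fun _ _ => 0) => // i.
exact: unit_mfun_cst0.
Qed.

Lemma dH_S_k_le A B : P_operator P A -> P_operator P B ->
  (dH (S_k P k A) (S_k P k B) <=
    (k%:R * Num.sqrt (fine (opnorm P (fun v x => A v x - B v x))))%:E)%E.
Proof.
move=> PA PB; apply: dH_le => _ [v v1 <-].
- by exists (law P (joint_map B v)); [exists v | exact: dLP_joint_law_le].
- by exists (law P (joint_map A v)); [exists v | exact: dLP_joint_law_le].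
Qed.

End S_k.

Lemma sum_nat_div_exp2 (R : realType) n :
  \sum_(1 <= k < n.+1) (k%:R / 2 ^+ k : R) = 2 - n.+2%:R / 2 ^+ n.
Proof.
elim: n => [|n ih]; first by rewrite big_geq // expr0 divr1 subrr.
rewrite big_nat_recr //= ih exprS -[n.+3]addn3 -[n.+2]addn2 -[n.+1]addn1 !natrD.
by field; rewrite expf_neq0.
Qed.

Lemma sum_nat_div_exp2_le (R : realType) n : \sum_(1 <= k < n) (k%:R / 2 ^+ k : R) <= 2.
Proof.
case: n => [|n]; first by rewrite big_geq.
by rewrite sum_nat_div_exp2 gerBl divr_ge0 ?exprn_ge0.
Qed.

Theorem lemma2p15 (d : measure_display) (T : measurableType d) (R : realType)
    (P : probability T R) (A B : (T -> R) -> (T -> R)) :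
  P_operator P A -> P_operator P B ->
  (dM P A B <= (3 * Num.sqrt (fine (opnorm P (fun v x => A v x - B v x))))%:E)%E.
Proof.
move=> PA PB; set s := Num.sqrt _.
have s0 : 0 <= s by exact: sqrtr_ge0.
have term_ge0 k : (0 <= (2 ^- k : R)%:E * dH (S_k P k A) (S_k P k B))%E.
  by apply: mule_ge0; [rewrite lee_fin invr_ge0 exprn_ge0 | apply/dH_ge0/S_k_neq0].
have term_le k :
    ((2 ^- k : R)%:E * dH (S_k P k A) (S_k P k B) <= (k%:R / 2 ^+ k * s)%:E)%E.
  rewrite mulrAC mulrC EFinM lee_wpmul2l ?lee_fin ?invr_ge0 ?exprn_ge0 //.
  exact: dH_S_k_le.
apply: lime_le; first exact: is_cvg_nneseries (fun k _ _ => term_ge0 k).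
apply: nearW => n; apply: le_trans (lee_sum _ (fun k _ => term_le k)) _.
rewrite sumEFin lee_fin -mulr_suml ler_wpM2r //.
by apply: le_trans (sum_nat_div_exp2_le R n) _; rewrite ler_nat.
Qed.
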